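(* Let $s,z\in\mathbb{N}$ with $\mu:=s+z\ge1$, let $\omega_1,\dots,\omega_s>0$, and let $p\in\mathbb{N}$. Then there exist a constant $c_\mu>0$ and continuous functions $c_i:\mathbb{R}_{>0}^{\mu-i}\to\mathbb{R}_{>0}$, $i\in\{1,\dots,\mu-1\}$, such that for all constants $a_1,\dots,a_\mu\in(0,1]$ and every trajectory $y(\cdot)$ of the closed-loop system $(\Sigma)$ with $u=\kappa(y)$ (both defined in the context, with these $a_i$), the control signal $U(t):=\kappa(y(t))$ satisfies, for all $k\in\{0,\dots,p\}$ and all $t\ge0$, $$|U^{(k)}(t)|\le a_\mu c_\mu+\sum_{i=1}^{\mu-1}a_i\,c_i(a_\mu,\dots,a_{i+1}).$$
   Context: Notation: $A_0=\begin{pmatrix}0&1\\-1&0\end{pmatrix}$, $b_0=\begin{pmatrix}0\\1\end{pmatrix}$; $\|\cdot\|$ is the Euclidean norm. Given $s,z\in\mathbb{N}$, $\mu=s+z\ge1$, $\omega_1,\dots,\omega_s>0$ and positive constants $a_1,\dots,a_\mu$, define for $1\le i\le\mu$: $\theta_{i,i+1}:=1$ and, for $i+2\le k\le\mu+1$, $\theta_{i,k}:=\prod_{h=i}^{k-2}\frac{1}{a_{h+1}}$; define $Q_{i,\mu}:=\prod_{l=i}^{\mu}a_l$. The system $(\Sigma)$ has state $y=(y_1,\dots,y_\mu)$ with $y_i\in\mathbb{R}^2$ for $i\le s$ and $y_i\in\mathbb{R}$ for $i>s$, input $u\in\mathbb{R}$, and reads $$\dot y_i=\omega_iA_0y_i+b_0\sum_{k=i+1}^{s}\theta_{i,k}b_0^Ty_k+b_0\sum_{k=s+1}^{\mu}\theta_{i,k}y_k+\theta_{i,\mu+1}b_0u,\quad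 i=1,\dots,s,$$ $$\dot y_i=\sum_{k=i+1}^{\mu}\theta_{i,k}y_k+\theta_{i,\mu+1}u,\quad i=s+1,\dots,\mu$$ (empty sums are zero). The feedback $\kappa$ is $$\kappa(y)=-\sum_{i=1}^{s}\frac{Q_{i,\mu}\,b_0^Ty_i}{\big(1+\sum_{m=i}^{\mu}\|y_m\|^2\big)^{1/2}}-\sum_{i=s+1}^{\mu}\frac{Q_{i,\mu}\,y_i}{\big(1+\sum_{m=i}^{\mu}\|y_m\|^2\big)^{1/2}}.$$ *)

From Stdlib Require Import Reals Lra Lia.
Open Scope R_scope.

Fixpoint sum_range (f : nat -> R) (lo n : nat) : R :=
  match n with
  | O => 0
  | S m => f lo + sum_range f (S lo) m
  end.

Fixpoint prod_range (f : nat -> R) (lo n : nat) : R :=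
  match n with
  | O => 1
  | S m => f lo * prod_range f (S lo) m
  end.

(* theta_{i,k} = prod_{h=i}^{k-2} 1/a_{h+1} = prod_{j=i+1}^{k-1} 1/a_j ;
   theta_{i,i+1} = 1 (empty product). *)
Definition theta (a : nat -> R) (i k : nat) : R :=
  prod_range (fun j => / a j) (S i) (k - i - 1).

Definition Qim (a : nat -> R) (i mu : nat) : R :=
  prod_range a i (mu - i + 1).

(* A state y = (y_1,...,y_mu) is encoded by two maps
   Y1 Y2 : nat -> R:
   - for 1 <= i <= s : y_i = (Y1 i, Y2 i) in R^2, so b0^T y_i = Y2 i;
   - for s < i <= mu : y_i = Y2 i in R (Y1 i is unused).             *)
Definition sqnorm (s : nat) (Y1 Y2 : nat -> R) (m : nat) : R :=
  if (m <=? s)%nat then Y1 m ^ 2 + Y2 m ^ 2 else Y2 m ^ 2.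

Definition kappa (s z : nat) (a : nat -> R) (Y1 Y2 : nat -> R) : R :=
  let mu := (s + z)%nat in
  let den i := sqrt (1 + sum_range (sqnorm s Y1 Y2) i (mu - i + 1)) in
  - sum_range (fun i => Qim a i mu * Y2 i / den i) 1 s
  - sum_range (fun i => Qim a i mu * Y2 i / den i) (S s) z.

Definition is_trajectory (s z : nat) (omega a : nat -> R)
    (Y1 Y2 : nat -> R -> R) : Prop :=
  let mu := (s + z)%nat in
  let u t := kappa s z a (fun i => Y1 i t) (fun i => Y2 i t) in
  (forall i t, (1 <= i <= s)%nat ->
     (* first component of omega_i A0 y_i = omega_i * (second component) *)
     derivable_pt_lim (Y1 i) t (omega i * Y2 i t) /\
     derivable_pt_lim (Y2 i) t
       (- omega i * Y1 i t
        + sum_range (fun k => theta a i k * Y2 k t) (S i) (s - i)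
        + sum_range (fun k => theta a i k * Y2 k t) (S s) z
        + theta a i (S mu) * u t)) /\
  (forall i t, (s + 1 <= i <= mu)%nat ->
     derivable_pt_lim (Y2 i) t
       (sum_range (fun k => theta a i k * Y2 k t) (S i) (mu - i)
        + theta a i (S mu) * u t)).

(* We model c_i as a map (nat -> R) -> R that only
   depends on the coordinates a_{i+1},...,a_mu, is positive and continuous
   (w.r.t. those coordinates) on the positive orthant. *)
Definition pos_on (mu i : nat) (a : nat -> R) : Prop :=
  forall j, (i < j <= mu)%nat -> 0 < a j.

Definition admissible_coef (mu i : nat) (c : (nat -> R) -> R) : Prop :=
  (forall a b, (forall j, (i < j <= mu)%nat -> a j = b j) -> c a = c b) /\
  (forall a, pos_on mu i a -> 0 < c a) /\
  (forall a, pos_on mu i a ->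
     forall eps, 0 < eps -> exists delta, 0 < delta /\
       forall b, pos_on mu i b ->
         (forall j, (i < j <= mu)%nat -> Rabs (b j - a j) < delta) ->
         Rabs (c b - c a) < eps).

(* Write rho_i = (1 + sum_{m >= i} |y_m|^2)^(-1/2), so that
   U = kappa(y) = - sum_l Q_{l,mu} rho_l b0^T y_l.  Along a trajectory every derivative
   of U is a polynomial in the quantities rho_i and rho_i y_m (m >= i), which all have
   modulus at most 1, with coefficients of the form c * prod a_j * prod 1/a_j': the
   family is closed under d/dt because (rho_i x)' = (rho_i'/rho_i) (rho_i x) + rho_i x'
   and both rho_i'/rho_i and rho_i (b0^T y_m)' are again of this form.  Every monomial
   carries a factor a_l, its level, while the inverses it carries are 1/a_j with j > l;
   as all a_j <= 1 it is bounded by a_l times a coefficient that depends continuously on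
   a_(l+1), ..., a_mu only.  Collecting the monomials of level l in U, ..., U^(p) gives
   c_l. *)

From Stdlib Require Import Reals Lra Lia List.
Import ListNotations.
Open Scope R_scope.

Lemma sum_range_add_length f lo n1 n2 :
  sum_range f lo (n1 + n2) = sum_range f lo n1 + sum_range f (lo + n1) n2.
Proof.
  revert lo; induction n1 as [|n1 IH]; intros lo; simpl.
  - rewrite Nat.add_0_r; ring.
  - rewrite IH, Nat.add_succ_r; simpl; ring.
Qed.

Lemma sum_range_ext f g lo n :
  (forall k, (lo <= k < lo + n)%nat -> f k = g k) ->
  sum_range f lo n = sum_range g lo n.
Proof.
  revert lo; induction n as [|n IH]; intros lo H; simpl; auto.
  rewrite H, IH; [reflexivity | intros; apply H | ]; lia.
Qed.

Lemma sum_range_scal c f lo n :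
  sum_range (fun k => c * f k) lo n = c * sum_range f lo n.
Proof. revert lo; induction n as [|n IH]; intros lo; simpl; rewrite ?IH; ring. Qed.

Lemma sum_range_plus f g lo n :
  sum_range (fun k => f k + g k) lo n = sum_range f lo n + sum_range g lo n.
Proof. revert lo; induction n as [|n IH]; intros lo; simpl; rewrite ?IH; ring. Qed.

Lemma sum_range_zero lo n : sum_range (fun _ => 0) lo n = 0.
Proof. revert lo; induction n as [|n IH]; intros lo; simpl; rewrite ?IH; ring. Qed.

Lemma sum_range_le f g lo n :
  (forall k, (lo <= k < lo + n)%nat -> f k <= g k) ->
  sum_range f lo n <= sum_range g lo n.
Proof.
  revert lo; induction n as [|n IH]; intros lo H; simpl; [lra|].
  apply Rplus_le_compat; [apply H; lia | apply IH; intros; apply H; lia].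
Qed.

Lemma sum_range_nonneg f lo n :
  (forall k, (lo <= k < lo + n)%nat -> 0 <= f k) -> 0 <= sum_range f lo n.
Proof.
  intros H; rewrite <- (sum_range_zero lo n); now apply sum_range_le.
Qed.

Lemma sum_range_term_le f lo n k :
  (forall k, (lo <= k < lo + n)%nat -> 0 <= f k) -> (lo <= k < lo + n)%nat ->
  f k <= sum_range f lo n.
Proof.
  revert lo; induction n as [|n IH]; intros lo H Hk; simpl; [lia|].
  destruct (Nat.eq_dec k lo) as [->|Hne].
  - assert (0 <= sum_range f (S lo) n) by (apply sum_range_nonneg; intros; apply H; lia).
    lra.
  - assert (0 <= f lo) by (apply H; lia).
    assert (f k <= sum_range f (S lo) n) by (apply IH; [intros; apply H|]; lia).
    lra.
Qed.

Lemma sum_range_indicator g k lo n : (lo <= k < lo + n)%nat ->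
  sum_range (fun i => if (k =? i)%nat then g i else 0) lo n = g k.
Proof.
  revert lo; induction n as [|n IH]; intros lo Hk; simpl; [lia|].
  destruct (Nat.eqb_spec k lo) as [->|Hne].
  - rewrite (sum_range_ext _ (fun _ => 0)), sum_range_zero; [ring|].
    intros j Hj; destruct (Nat.eqb_spec lo j); [lia | reflexivity].
  - rewrite IH by lia; ring.
Qed.

Definition prodl (l : list R) : R := fold_right Rmult 1 l.

Lemma prodl_app l1 l2 : prodl (l1 ++ l2) = prodl l1 * prodl l2.
Proof. induction l1 as [|x l1 IH]; simpl; rewrite ?IH; ring. Qed.

Lemma prod_range_prodl f lo n : prod_range f lo n = prodl (map f (seq lo n)).
Proof. revert lo; induction n as [|n IH]; intros lo; simpl; rewrite ?IH; reflexivity. Qed.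

Lemma prodl_pos {A} (f : A -> R) l :
  (forall j, In j l -> 0 < f j) -> 0 < prodl (map f l).
Proof.
  induction l as [|x l IH]; intros H; simpl; [lra|].
  apply Rmult_lt_0_compat; [apply H | apply IH; intros; apply H]; simpl; auto.
Qed.

Lemma prodl_le_1 {A} (f : A -> R) l :
  (forall j, In j l -> 0 <= f j <= 1) -> prodl (map f l) <= 1.
Proof.
  induction l as [|x l IH]; intros H; simpl; [lra|].
  assert (Hx : 0 <= f x <= 1) by (apply H; left; auto).
  assert (IHl : prodl (map f l) <= 1) by (apply IH; intros; apply H; right; auto).
  destruct (Rle_or_lt 0 (prodl (map f l))); nra.
Qed.

Lemma prodl_le_factor {A} (f : A -> R) l y :
  (forall j, In j l -> 0 < f j <= 1) -> In y l -> prodl (map f l) <= f y.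
Proof.
  induction l as [|x l IH]; intros H Hy; simpl; [destruct Hy|].
  assert (Hx : 0 < f x <= 1) by (apply H; left; auto).
  assert (H' : forall j, In j l -> 0 < f j <= 1) by (intros; apply H; right; auto).
  assert (0 < prodl (map f l)) by (apply prodl_pos; intros; apply H'; auto).
  destruct Hy as [<-|Hy].
  - assert (prodl (map f l) <= 1) by (apply prodl_le_1; intros j Hj; specialize (H' j Hj); lra).
    nra.
  - specialize (IH H' Hy). nra.
Qed.

Lemma Rabs_prodl_le_1 {A} (f : A -> R) l :
  (forall v, In v l -> Rabs (f v) <= 1) -> Rabs (prodl (map f l)) <= 1.
Proof.
  induction l as [|x l IH]; intros H; simpl; [rewrite Rabs_R1; lra|].
  rewrite Rabs_mult.
  assert (Rabs (f x) <= 1) by (apply H; left; auto).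
  assert (Rabs (prodl (map f l)) <= 1) by (apply IH; intros; apply H; right; auto).
  pose proof (Rabs_pos (f x)); pose proof (Rabs_pos (prodl (map f l))). nra.
Qed.

Lemma derivable_pt_lim_eq f g x l l' :
  derivable_pt_lim f x l -> (forall t, f t = g t) -> l = l' -> derivable_pt_lim g x l'.
Proof. intros D E <-; exact (derivable_pt_lim_ext f g x l E D). Qed.

Lemma derivable_pt_lim_sum_range (f : nat -> R -> R) (f' : nat -> R) x lo n :
  (forall k, (lo <= k < lo + n)%nat -> derivable_pt_lim (f k) x (f' k)) ->
  derivable_pt_lim (fun t => sum_range (fun k => f k t) lo n) x (sum_range f' lo n).
Proof.
  revert lo; induction n as [|n IH]; intros lo H; simpl.
  - apply derivable_pt_lim_const.
  - apply (derivable_pt_lim_plus (f lo)); [apply H | apply IH; intros; apply H]; lia.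
Qed.

Lemma derivable_pt_lim_inv_sqrt f x l :
  derivable_pt_lim f x l -> 0 < f x ->
  derivable_pt_lim (fun t => / sqrt (f t)) x (- l / (2 * f x * sqrt (f x))).
Proof.
  intros D Hf.
  assert (Hq : 0 < sqrt (f x)) by now apply sqrt_lt_R0.
  assert (Dsqrt := derivable_pt_lim_comp f sqrt x l _ D (derivable_pt_lim_sqrt _ Hf)).
  eapply derivable_pt_lim_eq;
    [apply (derivable_pt_lim_div (fun _ => 1) (comp sqrt f) x 0 _
              (derivable_pt_lim_const 1 x) Dsqrt) | | ].
  - apply Rgt_not_eq, Hq.
  - intros t; unfold div_fct, comp, Rdiv; ring.
  - unfold comp, Rsqr; rewrite sqrt_sqrt by lra; field; lra.
Qed.

(** * Formal polynomials *)

Section FormalPolynomials.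

Context {V : Type}.

Record monomial := Monomial { coef : R; num : list nat; den : list nat; vars : list V }.

Definition poly := list monomial.

Definition mulm (m1 m2 : monomial) : monomial :=
  Monomial (coef m1 * coef m2) (num m1 ++ num m2) (den m1 ++ den m2) (vars m1 ++ vars m2).

Definition eval_monomial (a : nat -> R) (val : V -> R) (m : monomial) : R :=
  coef m * prodl (map a (num m)) * prodl (map (fun j => / a j) (den m))
  * prodl (map val (vars m)).

Definition eval_poly (a : nat -> R) (val : V -> R) (P : poly) : R :=
  fold_right (fun m acc => eval_monomial a val m + acc) 0 P.

Section Evaluation.

Variables (a : nat -> R) (val : V -> R).

Lemma eval_poly_app P Q : eval_poly a val (P ++ Q) = eval_poly a val P + eval_poly a val Q.
Proof. induction P as [|m P IH]; simpl; rewrite ?IH; ring. Qed.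

Lemma eval_mulm m1 m2 :
  eval_monomial a val (mulm m1 m2) = eval_monomial a val m1 * eval_monomial a val m2.
Proof. unfold eval_monomial, mulm; simpl; rewrite !map_app, !prodl_app; ring. Qed.

Lemma eval_poly_mulm_l m P :
  eval_poly a val (map (mulm m) P) = eval_monomial a val m * eval_poly a val P.
Proof. induction P as [|q P IH]; simpl; rewrite ?eval_mulm, ?IH; ring. Qed.

Lemma eval_poly_mulm_r m P :
  eval_poly a val (map (fun q => mulm q m) P) = eval_poly a val P * eval_monomial a val m.
Proof. induction P as [|q P IH]; simpl; rewrite ?eval_mulm, ?IH; ring. Qed.

Lemma eval_poly_map_seq (f : nat -> monomial) lo n :
  eval_poly a val (map f (seq lo n)) = sum_range (fun k => eval_monomial a val (f k)) lo n.
Proof. revert lo; induction n as [|n IH]; intros lo; simpl; rewrite ?IH; reflexivity. Qed.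

Lemma eval_poly_flat_map_seq (f : nat -> poly) lo n :
  eval_poly a val (flat_map f (seq lo n)) = sum_range (fun k => eval_poly a val (f k)) lo n.
Proof.
  revert lo; induction n as [|n IH]; intros lo; simpl; rewrite ?eval_poly_app, ?IH; reflexivity.
Qed.

End Evaluation.

Section FormalDerivative.

Variable dv : V -> poly.

Fixpoint dvars (l : list V) : poly :=
  match l with
  | [] => []
  | v :: r => map (fun q => mulm q (Monomial 1 [] [] r)) (dv v)
              ++ map (mulm (Monomial 1 [] [] [v])) (dvars r)
  end.

Definition dmonomial (m : monomial) : poly :=
  map (mulm (Monomial (coef m) (num m) (den m) [])) (dvars (vars m)).

Definition dpoly (P : poly) : poly := flat_map dmonomial P.

Variables (a : nat -> R) (val : R -> V -> R) (x : R).

Lemma derivable_pt_lim_eval_vars l :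
  (forall v, In v l -> derivable_pt_lim (fun t => val t v) x (eval_poly a (val x) (dv v))) ->
  derivable_pt_lim (fun t => prodl (map (val t) l)) x (eval_poly a (val x) (dvars l)).
Proof.
  induction l as [|v r IH]; intros H; simpl.
  - apply derivable_pt_lim_const.
  - rewrite eval_poly_app, eval_poly_mulm_l, eval_poly_mulm_r.
    eapply derivable_pt_lim_eq.
    + apply (derivable_pt_lim_mult (fun t => val t v) (fun t => prodl (map (val t) r)));
        [apply H | apply IH; intros; apply H]; simpl; auto.
    + reflexivity.
    + unfold eval_monomial; simpl; ring.
Qed.

Lemma derivable_pt_lim_eval_poly P :
  (forall m v, In m P -> In v (vars m) ->
     derivable_pt_lim (fun t => val t v) x (eval_poly a (val x) (dv v))) ->
  derivable_pt_lim (fun t => eval_poly a (val t) P) x (eval_poly a (val x) (dpoly P)).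
Proof.
  induction P as [|m P IH]; intros H; simpl.
  - apply derivable_pt_lim_const.
  - rewrite eval_poly_app. unfold dmonomial; rewrite eval_poly_mulm_l.
    apply (derivable_pt_lim_plus (fun t => eval_monomial a (val t) m)).
    + eapply derivable_pt_lim_eq.
      * apply (derivable_pt_lim_scal (fun t => prodl (map (val t) (vars m)))).
        apply derivable_pt_lim_eval_vars; intros; apply (H m); simpl; auto.
      * reflexivity.
      * unfold eval_monomial; simpl; ring.
    + apply IH; intros; apply (H m0); simpl; auto.
Qed.

End FormalDerivative.

Lemma in_dvars dv l r : In r (dvars dv l) ->
  exists pre v post q, l = pre ++ v :: post /\ In q (dv v) /\
    num r = num q /\ den r = den q /\ vars r = pre ++ vars q ++ post.
Proof.
  revert r; induction l as [|v l IH]; intros r Hr; simpl in Hr; [destruct Hr|].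
  apply in_app_iff in Hr as [Hr|Hr]; apply in_map_iff in Hr as [q [<- Hq]].
  - exists [], v, l, q; simpl; rewrite !app_nil_r; auto.
  - destruct (IH q Hq) as (pre & v' & post & q' & -> & Hq' & E1 & E2 & E3).
    exists (v :: pre), v', post, q'; simpl; rewrite E1, E2, E3; auto.
Qed.

Lemma in_dmonomial dv m r : In r (dmonomial dv m) ->
  exists pre v post q, vars m = pre ++ v :: post /\ In q (dv v) /\
    num r = num m ++ num q /\ den r = den m ++ den q /\ vars r = pre ++ vars q ++ post.
Proof.
  unfold dmonomial; intros Hr; apply in_map_iff in Hr as [r0 [<- Hr0]].
  destruct (in_dvars _ _ _ Hr0) as (pre & v & post & q & E & Hq & E1 & E2 & E3).
  exists pre, v, post, q; simpl; rewrite E1, E2, E3; auto.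
Qed.

End FormalPolynomials.

Arguments monomial : clear implicits.
Arguments poly : clear implicits.

(** * Continuity in the tail coordinates *)

(* the continuity clause of [admissible_coef] *)
Definition tail_continuous (mu i : nat) (F : (nat -> R) -> R) : Prop :=
  forall a, pos_on mu i a ->
  forall eps, 0 < eps -> exists delta, 0 < delta /\
    forall b, pos_on mu i b ->
      (forall j, (i < j <= mu)%nat -> Rabs (b j - a j) < delta) ->
      Rabs (F b - F a) < eps.

Section TailContinuity.

Variables mu i : nat.

Lemma tail_continuous_const c : tail_continuous mu i (fun _ => c).
Proof.
  intros a _ eps Heps; exists 1; split; [lra|].
  intros; rewrite Rminus_diag, Rabs_R0; exact Heps.
Qed.

Lemma tail_continuous_plus F G :
  tail_continuous mu i F -> tail_continuous mu i G -> tail_continuous mu i (fun a => F a + G a).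
Proof.
  intros HF HG a Ha eps Heps.
  destruct (HF a Ha (eps / 2)) as [d1 [Hd1 K1]]; [lra|].
  destruct (HG a Ha (eps / 2)) as [d2 [Hd2 K2]]; [lra|].
  exists (Rmin d1 d2); split; [now apply Rmin_pos|].
  intros b Hb Hj.
  assert (A1 := K1 b Hb (fun j H => Rlt_le_trans _ _ _ (Hj j H) (Rmin_l _ _))).
  assert (A2 := K2 b Hb (fun j H => Rlt_le_trans _ _ _ (Hj j H) (Rmin_r _ _))).
  replace (F b + G b - (F a + G a)) with ((F b - F a) + (G b - G a)) by ring.
  eapply Rle_lt_trans; [apply Rabs_triang | lra].
Qed.

Lemma tail_continuous_mult F G :
  tail_continuous mu i F -> tail_continuous mu i G -> tail_continuous mu i (fun a => F a * G a).
Proof.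
  intros HF HG a Ha eps Heps.
  set (MF := Rabs (F a) + 1); set (MG := Rabs (G a) + 1).
  assert (HMF : 0 < MF) by (unfold MF; pose proof (Rabs_pos (F a)); lra).
  assert (HMG : 0 < MG) by (unfold MG; pose proof (Rabs_pos (G a)); lra).
  destruct (HF a Ha (Rmin 1 (eps / (2 * MG)))) as [d1 [Hd1 K1]].
  { apply Rmin_pos; [lra | apply Rdiv_lt_0_compat; lra]. }
  destruct (HG a Ha (eps / (2 * MF))) as [d2 [Hd2 K2]]; [apply Rdiv_lt_0_compat; lra|].
  exists (Rmin d1 d2); split; [now apply Rmin_pos|].
  intros b Hb Hj.
  assert (A1 := K1 b Hb (fun j H => Rlt_le_trans _ _ _ (Hj j H) (Rmin_l _ _))).
  assert (A2 := K2 b Hb (fun j H => Rlt_le_trans _ _ _ (Hj j H) (Rmin_r _ _))).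
  assert (HFb : Rabs (F b) < MF).
  { replace (F b) with (F a + (F b - F a)) by ring.
    pose proof (Rabs_triang (F a) (F b - F a)); pose proof (Rmin_l 1 (eps / (2 * MG))).
    unfold MF; lra. }
  assert (T1 : Rabs (F b) * Rabs (G b - G a) < eps / 2).
  { apply Rle_lt_trans with (MF * Rabs (G b - G a)).
    - apply Rmult_le_compat_r; [apply Rabs_pos | lra].
    - replace (eps / 2) with (MF * (eps / (2 * MF))) by (field; lra).
      apply Rmult_lt_compat_l; lra. }
  assert (T2 : Rabs (G a) * Rabs (F b - F a) <= eps / 2).
  { replace (eps / 2) with (MG * (eps / (2 * MG))) by (field; lra).
    pose proof (Rmin_r 1 (eps / (2 * MG))).
    assert (Rabs (G a) <= MG) by (unfold MG; lra).
    apply Rmult_le_compat; try apply Rabs_pos; lra. }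
  replace (F b * G b - F a * G a) with (F b * (G b - G a) + G a * (F b - F a)) by ring.
  eapply Rle_lt_trans; [apply Rabs_triang|]; rewrite !Rabs_mult; lra.
Qed.

Lemma tail_continuous_inv_coord j : (i < j <= mu)%nat -> tail_continuous mu i (fun a => / a j).
Proof.
  intros Hj a Ha eps Heps; assert (Hx := Ha j Hj); set (x := a j) in *.
  exists (Rmin (x / 2) (eps * x * x / 2)); split.
  { apply Rmin_pos; [lra|]. apply Rdiv_lt_0_compat; [|lra].
    repeat apply Rmult_lt_0_compat; lra. }
  intros b Hb Hd; assert (Hy := Hb j Hj); specialize (Hd j Hj); set (y := b j) in *.
  assert (D1 : Rabs (y - x) < x / 2) by (eapply Rlt_le_trans; [exact Hd | apply Rmin_l]).
  assert (D2 : Rabs (y - x) < eps * x * x / 2) by (eapply Rlt_le_trans; [exact Hd | apply Rmin_r]).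
  assert (Hyx : x / 2 < y) by (apply Rabs_def2 in D1; lra).
  assert (Hxy : 0 < x * y) by nra.
  replace (/ y - / x) with ((x - y) * / (x * y)) by (field; lra).
  rewrite Rabs_mult, Rabs_inv, (Rabs_pos_eq (x * y)), <- Rabs_Ropp, Ropp_minus_distr by lra.
  apply (Rmult_lt_reg_r (x * y)); [exact Hxy|].
  rewrite Rmult_assoc, Rinv_l, Rmult_1_r by lra.
  assert (0 < eps * x) by (apply Rmult_lt_0_compat; lra).
  nra.
Qed.

Lemma tail_continuous_prodl_inv l : (forall j, In j l -> (i < j <= mu)%nat) ->
  tail_continuous mu i (fun a => prodl (map (fun j => / a j) l)).
Proof.
  induction l as [|j l IH]; intros H; simpl.
  - apply tail_continuous_const.
  - apply (tail_continuous_mult (fun a => / a j));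
      [apply tail_continuous_inv_coord, H | apply IH; intros; apply H]; simpl; auto.
Qed.

Lemma tail_continuous_sum_range (F : nat -> (nat -> R) -> R) lo n :
  (forall k, tail_continuous mu i (F k)) ->
  tail_continuous mu i (fun a => sum_range (fun k => F k a) lo n).
Proof.
  intros H; revert lo; induction n as [|n IH]; intros lo; simpl.
  - apply tail_continuous_const.
  - apply (tail_continuous_plus (F lo)); auto.
Qed.

End TailContinuity.

(** * Levels of monomials *)

Definition list_min (l : list nat) : nat :=
  match l with [] => O | x :: r => fold_right Nat.min x r end.

Lemma list_min_spec l : l <> [] ->
  In (list_min l) l /\ forall x, In x l -> (list_min l <= x)%nat.
Proof.
  destruct l as [|x r]; intros Hl; [congruence|]; clear Hl; simpl.
  induction r as [|y r [IH1 IH2]]; simpl.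
  - split; [now left | intros u [<-|[]]; lia].
  - split.
    + destruct (Nat.le_ge_cases y (fold_right Nat.min x r)).
      * rewrite Nat.min_l by lia; right; left; reflexivity.
      * rewrite Nat.min_r by lia; destruct IH1 as [<-|]; auto.
    + intros u [<-|[<-|Hu]];
        [pose proof (IH2 x (or_introl eq_refl)) | | pose proof (IH2 u (or_intror Hu))]; lia.
Qed.

Section Levels.

Context {V : Type}.

Definition level (m : monomial V) : nat := list_min (num m).

Definition weight (a : nat -> R) (m : monomial V) : R :=
  Rabs (coef m) * prodl (map (fun j => / a j) (den m)).

Definition level_weight (i : nat) (a : nat -> R) (P : poly V) : R :=
  fold_right (fun m acc => (if (level m =? i)%nat then weight a m else 0) + acc) 0 P.

Lemma Rabs_eval_monomial_le a val (m : monomial V) l :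
  (forall j, In j (num m) -> 0 < a j <= 1) -> (forall j, In j (den m) -> 0 < a j) ->
  (forall v, In v (vars m) -> Rabs (val v) <= 1) -> In l (num m) ->
  Rabs (eval_monomial a val m) <= a l * weight a m.
Proof.
  intros Hnum Hden Hvars Hl; unfold eval_monomial, weight.
  set (N := prodl (map a (num m))); set (D := prodl (map (fun j => / a j) (den m))).
  set (X := prodl (map val (vars m))).
  assert (HN : 0 < N <= a l)
    by (split; [apply prodl_pos; intros; apply Hnum | apply prodl_le_factor]; auto).
  assert (HD : 0 < D) by (apply prodl_pos; intros; apply Rinv_0_lt_compat, Hden; auto).
  assert (HX : Rabs X <= 1) by now apply Rabs_prodl_le_1.
  pose proof (Rabs_pos (coef m)); pose proof (Rabs_pos X).
  rewrite !Rabs_mult, (Rabs_pos_eq N), (Rabs_pos_eq D) by lra.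
  apply Rle_trans with (Rabs (coef m) * D * N).
  - replace (Rabs (coef m) * D * N) with (Rabs (coef m) * N * D * 1) by ring.
    apply Rmult_le_compat_l; [apply Rmult_le_pos; [apply Rmult_le_pos|]|]; lra.
  - replace (a l * (Rabs (coef m) * D)) with (Rabs (coef m) * D * a l) by ring.
    apply Rmult_le_compat_l; [apply Rmult_le_pos|]; lra.
Qed.

Lemma Rabs_eval_poly_le a val (P : poly V) lo n :
  (forall m, In m P -> (lo <= level m < lo + n)%nat /\
     Rabs (eval_monomial a val m) <= a (level m) * weight a m) ->
  Rabs (eval_poly a val P) <= sum_range (fun i => a i * level_weight i a P) lo n.
Proof.
  induction P as [|m P IH]; intros HP; simpl.
  - rewrite Rabs_R0, (sum_range_ext _ (fun _ => 0)), sum_range_zero by (intros; ring); lra.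
  - destruct (HP m (or_introl eq_refl)) as [Hlev Hm].
    rewrite (sum_range_ext _ (fun i => (if (level m =? i)%nat then a i * weight a m else 0)
                                        + a i * level_weight i a P))
      by (intros k _; destruct (level m =? k)%nat; ring).
    rewrite sum_range_plus, (sum_range_indicator (fun i => a i * weight a m)) by exact Hlev.
    eapply Rle_trans; [apply Rabs_triang|].
    apply Rplus_le_compat; [exact Hm | apply IH; intros; apply HP; right; auto].
Qed.

Definition dens_above_level (mu i : nat) (P : poly V) : Prop :=
  forall m j, In m P -> level m = i -> In j (den m) -> (i < j <= mu)%nat.

Lemma dens_above_level_cons mu i m (P : poly V) : dens_above_level mu i (m :: P) ->
  (level m = i -> forall j, In j (den m) -> (i < j <= mu)%nat) /\ dens_above_level mu i P.
Proof.
  intros HP; split; [intros Hm j | intros m' j Hm']; [apply (HP m) | apply (HP m')]; simpl; auto.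
Qed.

Lemma level_weight_nonneg mu i a (P : poly V) :
  dens_above_level mu i P -> pos_on mu i a -> 0 <= level_weight i a P.
Proof.
  intros HP Ha; induction P as [|m P IH]; simpl; [lra|].
  apply dens_above_level_cons in HP as [Hm HP].
  assert (0 <= level_weight i a P) by exact (IH HP).
  destruct (Nat.eqb_spec (level m) i) as [E|]; [|lra].
  assert (0 <= weight a m); [|lra].
  apply Rmult_le_pos; [apply Rabs_pos|]; apply Rlt_le, prodl_pos.
  intros j Hj; apply Rinv_0_lt_compat, Ha, Hm; assumption.
Qed.

Lemma level_weight_ext mu i a b (P : poly V) :
  dens_above_level mu i P ->
  (forall j, (i < j <= mu)%nat -> a j = b j) -> level_weight i a P = level_weight i b P.
Proof.
  intros HP Hab; induction P as [|m P IH]; simpl; [reflexivity|].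
  apply dens_above_level_cons in HP as [Hm HP].
  rewrite (IH HP); destruct (Nat.eqb_spec (level m) i) as [E|]; [|reflexivity].
  unfold weight; do 3 f_equal; apply map_ext_in.
  intros j Hj; rewrite Hab; [reflexivity | apply Hm; assumption].
Qed.

Lemma tail_continuous_level_weight mu i (P : poly V) :
  dens_above_level mu i P -> tail_continuous mu i (fun a => level_weight i a P).
Proof.
  intros HP; induction P as [|m P IH]; simpl; [apply tail_continuous_const|].
  apply dens_above_level_cons in HP as [Hm HP].
  apply (tail_continuous_plus _ _ (fun a => if (level m =? i)%nat then weight a m else 0));
    [| exact (IH HP)].
  destruct (Nat.eqb_spec (level m) i) as [E|]; [|apply tail_continuous_const].
  apply (tail_continuous_mult _ _ (fun _ => Rabs (coef m))); [apply tail_continuous_const|].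
  apply tail_continuous_prodl_inv, Hm, E.
Qed.

End Levels.

(** * The closed loop *)

(* [Rho i], [RhoY1 i m], [RhoY2 i m] stand for rho_i, rho_i y_m1 and rho_i y_m2 *)
Inductive var := Rho (i : nat) | RhoY1 (i m : nat) | RhoY2 (i m : nat).

Definition var_index (v : var) : nat :=
  match v with Rho i | RhoY1 i _ | RhoY2 i _ => i end.

Definition state (Y : nat -> R -> R) (t : R) : nat -> R := fun i => Y i t.

Definition theta_den (m k : nat) : list nat := seq (S m) (k - m - 1).

Lemma theta_prodl a m k : theta a m k = prodl (map (fun j => / a j) (theta_den m k)).
Proof. apply prod_range_prodl. Qed.

Section ClosedLoop.

Variables (s z : nat) (omega : nat -> R).

Local Notation mu := (s + z)%nat.

Definition rho (Y1 Y2 : nat -> R) (i : nat) : R :=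
  / sqrt (1 + sum_range (sqnorm s Y1 Y2) i (mu - i + 1)).

Definition eval_var (Y1 Y2 : nat -> R) (v : var) : R :=
  match v with
  | Rho i => rho Y1 Y2 i
  | RhoY1 i m => rho Y1 Y2 i * Y1 m
  | RhoY2 i m => rho Y1 Y2 i * Y2 m
  end.

Definition valid_var (v : var) : Prop :=
  match v with
  | Rho i => (1 <= i <= mu)%nat
  | RhoY1 i m => (1 <= i <= m)%nat /\ (m <= s)%nat
  | RhoY2 i m => (1 <= i <= m)%nat /\ (m <= mu)%nat
  end.

Lemma sqnorm_nonneg Y1 Y2 m : 0 <= sqnorm s Y1 Y2 m.
Proof. unfold sqnorm; destruct (m <=? s)%nat; nra. Qed.

Lemma sum_sqnorm_nonneg Y1 Y2 i : 0 <= sum_range (sqnorm s Y1 Y2) i (mu - i + 1).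
Proof. apply sum_range_nonneg; intros; apply sqnorm_nonneg. Qed.

Lemma Rabs_rho_mult_le Y1 Y2 i y :
  y ^ 2 <= 1 + sum_range (sqnorm s Y1 Y2) i (mu - i + 1) -> Rabs (rho Y1 Y2 i * y) <= 1.
Proof.
  intros Hy; unfold rho.
  assert (HN : 0 < 1 + sum_range (sqnorm s Y1 Y2) i (mu - i + 1))
    by (pose proof (sum_sqnorm_nonneg Y1 Y2 i); lra).
  set (N := 1 + _) in *.
  assert (Hq : 0 < sqrt N) by (apply sqrt_lt_R0; lra).
  assert (HqN : sqrt N * sqrt N = N) by (apply sqrt_sqrt; lra).
  rewrite Rabs_mult, Rabs_inv, (Rabs_pos_eq (sqrt N)) by lra.
  apply (Rmult_le_reg_l (sqrt N)); [exact Hq|].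
  rewrite <- Rmult_assoc, Rinv_r, Rmult_1_l, Rmult_1_r by lra.
  unfold Rabs; destruct (Rcase_abs y); nra.
Qed.

Lemma Rabs_eval_var_le Y1 Y2 v : valid_var v -> Rabs (eval_var Y1 Y2 v) <= 1.
Proof.
  assert (Hterm : forall i m, (i <= m <= mu)%nat ->
            sqnorm s Y1 Y2 m <= sum_range (sqnorm s Y1 Y2) i (mu - i + 1))
    by (intros; apply sum_range_term_le; [intros; apply sqnorm_nonneg | lia]).
  destruct v as [i|i m|i m]; simpl; intros Hv.
  - rewrite <- (Rmult_1_r (rho Y1 Y2 i)); apply Rabs_rho_mult_le.
    pose proof (sum_sqnorm_nonneg Y1 Y2 i); lra.
  - apply Rabs_rho_mult_le; specialize (Hterm i m ltac:(lia)).
    assert (Y1 m ^ 2 <= sqnorm s Y1 Y2 m); [|lra].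
    unfold sqnorm; destruct (Nat.leb_spec m s); [|lia].
    pose proof (pow2_ge_0 (Y2 m)); lra.
  - apply Rabs_rho_mult_le; specialize (Hterm i m ltac:(lia)).
    assert (Y2 m ^ 2 <= sqnorm s Y1 Y2 m); [|lra].
    unfold sqnorm; destruct (m <=? s)%nat; pose proof (pow2_ge_0 (Y1 m)); lra.
Qed.

Lemma kappa_rho a Y1 Y2 : kappa s z a Y1 Y2 =
  - sum_range (fun l => prodl (map a (seq l (mu - l + 1))) * rho Y1 Y2 l * Y2 l) 1 mu.
Proof.
  unfold kappa, Qim; rewrite sum_range_add_length; simpl (1 + s)%nat.
  rewrite Ropp_plus_distr; unfold Rminus; f_equal; f_equal;
    apply sum_range_ext; intros; rewrite prod_range_prodl; unfold rho, Rdiv; ring.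
Qed.

(* the part of (b0^T y_m)' that does not come from the rotation [omega_m A0] *)
Definition forcing (a : nat -> R) (Y1 Y2 : nat -> R) (m : nat) : R :=
  sum_range (fun k => theta a m k * Y2 k) (S m) (mu - m) + theta a m (S mu) * kappa s z a Y1 Y2.

Definition kappa_poly (c : R) (d : list nat) (w : list var) : poly var :=
  map (fun l => Monomial (- c) (seq l (mu - l + 1)) d (w ++ [RhoY2 l l])) (seq 1 mu).

Definition rho_forcing_poly (i m : nat) (c : R) (w : list var) : poly var :=
  map (fun k => Monomial c [] (theta_den m k) (w ++ [RhoY2 i k])) (seq (S m) (mu - m))
  ++ kappa_poly c (theta_den m (S mu)) (w ++ [Rho i]).

Definition dlog_rho_poly (i : nat) (w : var) : poly var :=
  flat_map (fun l => rho_forcing_poly i l (-1) [w; RhoY2 i l]) (seq i (mu - i + 1)).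

(* (rho_i x)' = (rho_i' / rho_i) (rho_i x) + rho_i x', see [eval_dlog_rho_poly] *)
Definition var_deriv (v : var) : poly var :=
  dlog_rho_poly (var_index v) v ++
  match v with
  | Rho _ => []
  | RhoY1 i m => [Monomial (omega m) [] [] [RhoY2 i m]]
  | RhoY2 i m => (if (m <=? s)%nat then [Monomial (- omega m) [] [] [RhoY1 i m]] else [])
                 ++ rho_forcing_poly i m 1 []
  end.

Section Evaluation.

Variables (a : nat -> R) (Y1 Y2 : nat -> R).

Local Notation evalP := (eval_poly a (eval_var Y1 Y2)).
Local Notation prod_vars w := (prodl (map (eval_var Y1 Y2) w)).

Lemma eval_kappa_poly c d w :
  evalP (kappa_poly c d w) = c * prodl (map (fun j => / a j) d) * prod_vars w * kappa s z a Y1 Y2.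
Proof.
  unfold kappa_poly; rewrite eval_poly_map_seq, kappa_rho.
  set (C := c * _ * _).
  replace (C * _) with (- C * sum_range (fun l => prodl (map a (seq l (mu - l + 1)))
                                                 * rho Y1 Y2 l * Y2 l) 1 mu) by ring.
  rewrite <- sum_range_scal; apply sum_range_ext; intros.
  unfold eval_monomial, C; simpl; rewrite map_app, prodl_app; simpl; ring.
Qed.

Lemma eval_rho_forcing_poly i m c w :
  evalP (rho_forcing_poly i m c w) = c * prod_vars w * rho Y1 Y2 i * forcing a Y1 Y2 m.
Proof.
  unfold rho_forcing_poly, forcing.
  rewrite eval_poly_app, eval_kappa_poly, eval_poly_map_seq, Rmult_plus_distr_l.
  f_equal.
  - rewrite <- sum_range_scal; apply sum_range_ext; intros.
    unfold eval_monomial; simpl; rewrite theta_prodl, map_app, prodl_app; simpl; ring.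
  - rewrite theta_prodl, map_app, prodl_app; simpl; ring.
Qed.

Lemma eval_dlog_rho_poly i w :
  evalP (dlog_rho_poly i w) =
  - eval_var Y1 Y2 w * rho Y1 Y2 i ^ 2
    * sum_range (fun l => Y2 l * forcing a Y1 Y2 l) i (mu - i + 1).
Proof.
  unfold dlog_rho_poly; rewrite eval_poly_flat_map_seq, <- sum_range_scal.
  apply sum_range_ext; intros; rewrite eval_rho_forcing_poly; simpl; ring.
Qed.

End Evaluation.

Section Trajectory.

Variables (a : nat -> R) (Y1 Y2 : nat -> R -> R).

Hypothesis traj : is_trajectory s z omega a Y1 Y2.

Local Notation forcing_at t := (forcing a (state Y1 t) (state Y2 t)).
Local Notation rho_at t := (rho (state Y1 t) (state Y2 t)).

Lemma derivable_pt_lim_Y2 m t : (1 <= m <= mu)%nat ->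
  derivable_pt_lim (Y2 m) t
    ((if (m <=? s)%nat then - omega m * Y1 m t else 0) + forcing_at t m).
Proof.
  destruct traj as [Hrot Hint]; intros Hm; unfold forcing, state.
  destruct (Nat.leb_spec m s) as [Hs|Hs].
  - destruct (Hrot m t ltac:(lia)) as [_ D].
    eapply derivable_pt_lim_eq; [exact D | reflexivity |].
    replace (mu - m)%nat with (s - m + z)%nat by lia.
    rewrite sum_range_add_length; replace (S m + (s - m))%nat with (S s) by lia; ring.
  - eapply derivable_pt_lim_eq; [exact (Hint m t ltac:(lia)) | reflexivity | ring].
Qed.

(* the rotation terms [omega_m y_m1 y_m2] cancel *)
Lemma derivable_pt_lim_sqnorm m t : (1 <= m <= mu)%nat ->
  derivable_pt_lim (fun t => sqnorm s (state Y1 t) (state Y2 t) m) t (2 * Y2 m t * forcing_at t m).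
Proof.
  intros Hm; pose proof (derivable_pt_lim_Y2 m t Hm) as D2; unfold sqnorm.
  destruct (Nat.leb_spec m s) as [Hs|Hs].
  - destruct (proj1 traj m t ltac:(lia)) as [D1 _].
    eapply derivable_pt_lim_eq;
      [apply (derivable_pt_lim_plus (Y1 m * Y1 m) (Y2 m * Y2 m))%F;
         apply derivable_pt_lim_mult; eassumption
      | intros; unfold plus_fct, mult_fct, state; ring | ring].
  - eapply derivable_pt_lim_eq;
      [apply (derivable_pt_lim_mult (Y2 m) (Y2 m)); eassumption
      | intros; unfold mult_fct, state; ring | ring].
Qed.

Lemma derivable_pt_lim_rho i t : (1 <= i <= mu)%nat ->
  derivable_pt_lim (fun t => rho_at t i) t
    (- rho_at t i ^ 3 * sum_range (fun m => Y2 m t * forcing_at t m) i (mu - i + 1)).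
Proof.
  intros Hi.
  set (N t := 1 + sum_range (sqnorm s (state Y1 t) (state Y2 t)) i (mu - i + 1)).
  assert (DN : derivable_pt_lim N t
                 (sum_range (fun m => 2 * (Y2 m t * forcing_at t m)) i (mu - i + 1))).
  { eapply derivable_pt_lim_eq.
    - apply (derivable_pt_lim_plus (fun _ => 1)); [apply derivable_pt_lim_const|].
      apply (derivable_pt_lim_sum_range (fun m t => sqnorm s (state Y1 t) (state Y2 t) m)
               (fun m => 2 * Y2 m t * forcing_at t m) t i (mu - i + 1)).
      intros; apply derivable_pt_lim_sqnorm; lia.
    - reflexivity.
    - rewrite Rplus_0_l; apply sum_range_ext; intros; ring. }
  assert (HN : 0 < N t)
    by (pose proof (sum_sqnorm_nonneg (state Y1 t) (state Y2 t) i); unfold N; lra).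
  eapply derivable_pt_lim_eq; [apply (derivable_pt_lim_inv_sqrt N t _ DN HN) | reflexivity |].
  rewrite sum_range_scal; unfold rho; fold (N t).
  assert (Hq : sqrt (N t) * sqrt (N t) = N t) by (apply sqrt_sqrt; lra).
  assert (0 < sqrt (N t)) by (apply sqrt_lt_R0; lra).
  set (q := sqrt (N t)) in *; rewrite <- Hq; field; lra.
Qed.

Lemma derivable_pt_lim_eval_var v t : valid_var v ->
  derivable_pt_lim (fun t => eval_var (state Y1 t) (state Y2 t) v) t
    (eval_poly a (eval_var (state Y1 t) (state Y2 t)) (var_deriv v)).
Proof.
  intros Hv; unfold var_deriv; rewrite eval_poly_app, eval_dlog_rho_poly.
  destruct v as [i|i m|i m]; simpl in Hv |- *.
  - eapply derivable_pt_lim_eq;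
      [apply (derivable_pt_lim_rho i); lia | reflexivity | simpl; unfold state; ring].
  - eapply derivable_pt_lim_eq;
      [apply (derivable_pt_lim_mult (fun t => rho_at t i) (Y1 m));
         [apply derivable_pt_lim_rho | apply (proj1 traj)]; lia
      | reflexivity | unfold eval_monomial; simpl; unfold state; ring].
  - rewrite eval_poly_app, eval_rho_forcing_poly.
    eapply derivable_pt_lim_eq;
      [apply (derivable_pt_lim_mult (fun t => rho_at t i) (Y2 m));
         [apply derivable_pt_lim_rho | apply derivable_pt_lim_Y2]; lia
      | reflexivity | ].
    destruct (m <=? s)%nat; simpl; unfold eval_monomial; simpl; unfold state; ring.
Qed.

End Trajectory.

(* [l] bounds the level from above; the condition on the variables is what makes the
   invariant survive differentiation *)
Definition leveled (m : monomial var) : Prop :=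
  (forall j, In j (num m) -> (1 <= j <= mu)%nat) /\
  (forall v, In v (vars m) -> valid_var v) /\
  exists l, In l (num m) /\ (forall j, In j (den m) -> (l < j <= mu)%nat) /\
            (forall v, In v (vars m) -> (l <= var_index v)%nat).

(* what may replace a variable of index [i] in a leveled monomial *)
Definition leveled_factor (i : nat) (q : monomial var) : Prop :=
  (forall j, In j (num q) -> (1 <= j <= mu)%nat) /\
  (forall j, In j (den q) -> (i < j <= mu)%nat) /\
  (forall v, In v (vars q) -> valid_var v /\ ((i <= var_index v)%nat \/ In (var_index v) (num q))).

Lemma leveled_factor_rho_forcing_poly i m c w q :
  (1 <= i <= m)%nat -> (m <= mu)%nat ->
  (forall v, In v w -> valid_var v /\ (i <= var_index v)%nat) ->
  In q (rho_forcing_poly i m c w) -> leveled_factor i q.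
Proof.
  intros Him Hm Hw Hq.
  unfold rho_forcing_poly, kappa_poly, theta_den in Hq.
  apply in_app_iff in Hq as [Hq|Hq]; apply in_map_iff in Hq as [k [<- Hk]]; apply in_seq in Hk.
  - split; [intros j []|split]; cbn [num den vars].
    + intros j Hj; apply in_seq in Hj; lia.
    + intros v Hv; apply in_app_iff in Hv as [Hv|[<-|[]]].
      * destruct (Hw v Hv); auto.
      * split; [simpl; lia | left; simpl; lia].
  - split; [|split]; cbn [num den vars].
    + intros j Hj; apply in_seq in Hj; lia.
    + intros j Hj; apply in_seq in Hj; lia.
    + intros v Hv; rewrite <- app_assoc in Hv; apply in_app_iff in Hv as [Hv|[<-|[<-|[]]]].
      * destruct (Hw v Hv); auto.
      * split; [simpl; lia | left; simpl; lia].
      * split; [simpl; lia | right; apply in_seq; simpl; lia].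
Qed.

Lemma leveled_factor_single_var i c u : valid_var u -> (i <= var_index u)%nat ->
  leveled_factor i (Monomial c [] [] [u]).
Proof.
  intros Hu Hi; split; [intros j []|split; [intros j []|]].
  intros v [<-|[]]; auto.
Qed.

Lemma leveled_factor_var_deriv v q : valid_var v -> In q (var_deriv v) ->
  leveled_factor (var_index v) q.
Proof.
  intros Hv Hq; unfold var_deriv in Hq; apply in_app_iff in Hq as [Hq|Hq].
  - unfold dlog_rho_poly in Hq; apply in_flat_map in Hq as [l [Hl Hq]]; apply in_seq in Hl.
    assert (Hi : (1 <= var_index v <= mu)%nat) by (destruct v; simpl in *; lia).
    apply (leveled_factor_rho_forcing_poly _ l (-1) [v; RhoY2 (var_index v) l]); try lia; auto.
    intros u [<-|[<-|[]]]; simpl; split; auto; lia.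
  - destruct v as [i|i m|i m]; simpl in Hv, Hq |- *; [destruct Hq | |].
    + destruct Hq as [<-|[]]; apply leveled_factor_single_var; simpl; lia.
    + apply in_app_iff in Hq as [Hq|Hq].
      * destruct (Nat.leb_spec m s); [destruct Hq as [<-|[]] | destruct Hq].
        apply leveled_factor_single_var; simpl; lia.
      * apply (leveled_factor_rho_forcing_poly _ m 1 []); auto; [lia | lia | intros u []].
Qed.

Lemma leveled_dmonomial m r : leveled m -> In r (dmonomial var_deriv m) -> leveled r.
Proof.
  intros (Hnum & Hvars & l & Hl & Hden & Hidx) Hr.
  destruct (in_dmonomial _ _ _ Hr) as (pre & v & post & q & Ev & Hq & Enum & Eden & Evars).
  assert (Hrest : forall u, In u (pre ++ post) -> In u (vars m))
    by (intros u Hu; rewrite Ev; apply in_app_iff in Hu as [Hu|Hu];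
        apply in_app_iff; [left | right; right]; exact Hu).
  assert (Hv : In v (vars m)) by (rewrite Ev; apply in_app_iff; right; left; reflexivity).
  destruct (leveled_factor_var_deriv v q (Hvars v Hv) Hq) as (Qnum & Qden & Qvars).
  (* the new level is the least of [l] and the numerator indices of the factor *)
  destruct (list_min_spec (l :: num q)) as [Hmin Hle]; [discriminate|].
  set (l' := list_min (l :: num q)) in *.
  assert (Hl' : (l' <= l)%nat) by (apply Hle; left; reflexivity).
  assert (Hidx_rest : forall u, In u (pre ++ post) -> (l' <= var_index u)%nat)
    by (intros u Hu; specialize (Hidx u (Hrest u Hu)); lia).
  unfold leveled; rewrite Enum, Eden, Evars; split; [|split].
  - intros j Hj; apply in_app_iff in Hj as [Hj|Hj]; auto.
  - intros u Hu; apply in_app_iff in Hu as [Hu|Hu]; [|apply in_app_iff in Hu as [Hu|Hu]].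
    + apply Hvars, Hrest, in_app_iff; auto.
    + apply Qvars, Hu.
    + apply Hvars, Hrest, in_app_iff; auto.
  - exists l'; split; [|split].
    + destruct Hmin as [<-|Hmin]; apply in_app_iff; auto.
    + intros j Hj; apply in_app_iff in Hj as [Hj|Hj];
        [specialize (Hden j Hj) | specialize (Qden j Hj); specialize (Hidx v Hv)]; lia.
    + intros u Hu; apply in_app_iff in Hu as [Hu|Hu]; [|apply in_app_iff in Hu as [Hu|Hu]].
      * apply Hidx_rest, in_app_iff; auto.
      * specialize (Hidx v Hv).
        destruct (proj2 (Qvars u Hu)) as [H|H]; [lia | apply Hle; right; exact H].
      * apply Hidx_rest, in_app_iff; auto.
Qed.

Definition U_poly (k : nat) : poly var :=
  Nat.iter k (dpoly var_deriv) (kappa_poly 1 [] []).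

Lemma leveled_U_poly k m : In m (U_poly k) -> leveled m.
Proof.
  revert m; induction k as [|k IH]; intros m Hm; simpl in Hm.
  - unfold kappa_poly in Hm; apply in_map_iff in Hm as [l [<- Hl]]; apply in_seq in Hl.
    split; [|split]; cbn [num den vars].
    + intros j Hj; apply in_seq in Hj; lia.
    + intros u [<-|[]]; simpl; lia.
    + exists l; split; [apply in_seq; lia | split; [intros j [] | intros u [<-|[]]; simpl; lia]].
  - apply in_flat_map in Hm as [m0 [Hm0 Hm]].
    exact (leveled_dmonomial m0 m (IH m0 Hm0) Hm).
Qed.

Lemma leveled_level m : leveled m ->
  (1 <= level m <= mu)%nat /\ In (level m) (num m) /\
  forall j, In j (den m) -> (level m < j <= mu)%nat.
Proof.
  intros (Hnum & _ & l & Hl & Hden & _).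
  destruct (list_min_spec (num m)) as [Hin Hle]; [intros E; rewrite E in Hl; destruct Hl|].
  specialize (Hle l Hl); unfold level; split; [apply Hnum, Hin | split; [exact Hin|]].
  intros j Hj; specialize (Hden j Hj); lia.
Qed.

Lemma Rabs_eval_leveled_le a Y1 Y2 P :
  (forall j, (1 <= j <= mu)%nat -> 0 < a j <= 1) -> (forall m, In m P -> leveled m) ->
  Rabs (eval_poly a (eval_var Y1 Y2) P) <= sum_range (fun i => a i * level_weight i a P) 1 mu.
Proof.
  intros Ha HP; apply Rabs_eval_poly_le; intros m Hm.
  destruct (leveled_level m (HP m Hm)) as (Hlev & Hin & Hden).
  destruct (HP m Hm) as (Hnum & Hvars & _).
  split; [lia|].
  apply Rabs_eval_monomial_le; [| | | exact Hin].
  - intros j Hj; apply Ha, Hnum, Hj.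
  - intros j Hj; specialize (Hden j Hj); apply Ha; lia.
  - intros v Hv; apply Rabs_eval_var_le, Hvars, Hv.
Qed.

End ClosedLoop.

(** * The constants c_i *)

Section Coefficients.

Variables (s z : nat) (omega : nat -> R) (p : nat).

Local Notation mu := (s + z)%nat.

Definition coefficient (i : nat) (a : nat -> R) : R :=
  1 + sum_range (fun k => level_weight i a (U_poly s z omega k)) 0 (S p).

Lemma dens_above_level_U_poly k i : dens_above_level mu i (U_poly s z omega k).
Proof.
  intros m j Hm <- Hj.
  exact (proj2 (proj2 (leveled_level s z m (leveled_U_poly s z omega k m Hm))) j Hj).
Qed.

Lemma coefficient_admissible i : admissible_coef mu i (coefficient i).
Proof.
  split; [|split].
  - intros a b Hab; unfold coefficient; f_equal; apply sum_range_ext; intros k _.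
    apply (level_weight_ext mu); [apply dens_above_level_U_poly | exact Hab].
  - intros a Ha; unfold coefficient.
    enough (0 <= sum_range (fun k => level_weight i a (U_poly s z omega k)) 0 (S p)) by lra.
    apply sum_range_nonneg; intros k _.
    apply (level_weight_nonneg mu); [apply dens_above_level_U_poly | exact Ha].
  - apply (tail_continuous_plus _ _ (fun _ => 1)); [apply tail_continuous_const|].
    apply (tail_continuous_sum_range _ _ (fun k a => level_weight i a (U_poly s z omega k))).
    intros k; apply tail_continuous_level_weight, dens_above_level_U_poly.
Qed.

Lemma level_weight_le_coefficient i k a : pos_on mu i a -> (k <= p)%nat ->
  level_weight i a (U_poly s z omega k) <= coefficient i a.
Proof.
  intros Ha Hk; unfold coefficient.
  enough (level_weight i a (U_poly s z omega k)
          <= sum_range (fun k => level_weight i a (U_poly s z omega k)) 0 (S p)) by lra.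
  apply (sum_range_term_le (fun k => level_weight i a (U_poly s z omega k))); [|lia].
  intros; apply (level_weight_nonneg mu); [apply dens_above_level_U_poly | exact Ha].
Qed.

Lemma Rabs_U_poly_le a Y1 Y2 k : (1 <= mu)%nat ->
  (forall j, (1 <= j <= mu)%nat -> 0 < a j <= 1) -> (k <= p)%nat ->
  Rabs (eval_poly a (eval_var s z Y1 Y2) (U_poly s z omega k)) <=
  a mu * coefficient mu (fun _ => 1) + sum_range (fun i => a i * coefficient i a) 1 (mu - 1).
Proof.
  intros Hmu Ha Hk.
  eapply Rle_trans; [apply Rabs_eval_leveled_le; [exact Ha | apply leveled_U_poly]|].
  eapply Rle_trans.
  - apply (sum_range_le _ (fun i => a i * coefficient i a)); intros i Hi.
    apply Rmult_le_compat_l; [apply Rlt_le, (Ha i); lia|].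
    apply level_weight_le_coefficient; [intros j Hj; apply (Ha j); lia | exact Hk].
  - replace mu with (mu - 1 + 1)%nat at 1 by lia.
    rewrite sum_range_add_length; replace (1 + (mu - 1))%nat with mu by lia; simpl.
    (* [coefficient mu] depends on no coordinate of [a] *)
    rewrite (proj1 (coefficient_admissible mu) a (fun _ => 1)) by lia; lra.
Qed.

End Coefficients.

Lemma eval_U_poly_0 s z omega a Y1 Y2 :
  eval_poly a (eval_var s z Y1 Y2) (U_poly s z omega 0) = kappa s z a Y1 Y2.
Proof. simpl; rewrite eval_kappa_poly; simpl; ring. Qed.

Lemma derivable_pt_lim_U_poly s z omega a Y1 Y2 k t :
  is_trajectory s z omega a Y1 Y2 ->
  derivable_pt_lim
    (fun t => eval_poly a (eval_var s z (state Y1 t) (state Y2 t)) (U_poly s z omega k)) t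
    (eval_poly a (eval_var s z (state Y1 t) (state Y2 t)) (U_poly s z omega (S k))).
Proof.
  intros Htraj.
  apply (derivable_pt_lim_eval_poly _ a (fun t => eval_var s z (state Y1 t) (state Y2 t)));
    intros m v Hm Hv.
  apply derivable_pt_lim_eval_var; [exact Htraj|].
  exact (proj1 (proj2 (leveled_U_poly s z omega k m Hm)) v Hv).
Qed.

Theorem proposition2 (s z : nat) (omega : nat -> R) (p : nat) :
  (1 <= s + z)%nat ->
  (forall i, (1 <= i <= s)%nat -> 0 < omega i) ->
  exists (cmu : R) (c : nat -> (nat -> R) -> R),
    0 < cmu /\
    (forall i, (1 <= i <= s + z - 1)%nat -> admissible_coef (s + z) i (c i)) /\
    forall (a : nat -> R) (Y1 Y2 : nat -> R -> R),
      (forall i, (1 <= i <= s + z)%nat -> 0 < a i <= 1) ->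
      is_trajectory s z omega a Y1 Y2 ->
      exists D : nat -> R -> R,
        (forall t, D O t = kappa s z a (fun i => Y1 i t) (fun i => Y2 i t)) /\
        (forall j t, (j < p)%nat -> derivable_pt_lim (D j) t (D (S j) t)) /\
        (forall k t, (k <= p)%nat -> 0 <= t ->
           Rabs (D k t) <= a (s + z)%nat * cmu
                           + sum_range (fun i => a i * c i a) 1 (s + z - 1)).
Proof.
  intros Hmu _.
  exists (coefficient s z omega p (s + z) (fun _ => 1)), (coefficient s z omega p).
  split; [|split].
  - apply (coefficient_admissible s z omega p (s + z)); intros j Hj; lra.
  - intros i _; apply coefficient_admissible.
  - intros a Y1 Y2 Ha Htraj.
    exists (fun k t => eval_poly a (eval_var s z (state Y1 t) (state Y2 t)) (U_poly s z omega k)).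
    split; [|split].
    + intros t; apply eval_U_poly_0.
    + intros j t _; apply derivable_pt_lim_U_poly, Htraj.
    + intros k t Hk _; apply Rabs_U_poly_le; assumption.
Qed.
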